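(* Consider the following interactive optimization problem with a single unknown knapsack constraint. Given $n$, a known objective vector $\boldsymbol{v} \in \mathbb{R}^n$ and a known set $X \subseteq \{0,1\}^n$, one wants to solve $$\max\ \boldsymbol{v}\cdot\boldsymbol{x} \quad \text{s.t.}\quad \bar{\boldsymbol{w}}\cdot \boldsymbol{x} \le 1,\ \ \boldsymbol{x}\in X,$$ where the weight vector $\bar{\boldsymbol{w}} \in [0,1]^n$ is unknown to the algorithm; the only access to $\bar{\boldsymbol{w}}$ is through a membership oracle which, given $\boldsymbol{\chi}\in X$, answers (with certainty) whether $\bar{\boldsymbol{w}}\cdot\boldsymbol{\chi}\le 1$. Calling the oracle on a point is called labeling that point. Then for any deterministic algorithm for this problem and any $\epsilon\in(0,1)$, there exists an instance of the problem (as a function of $n$) on which the algorithm takes $\Omega(n^{1/\epsilon})$ oracle calls to label a feasible solution whose objective value is within a multiplicative factor of $(1-\epsilon)$ with respect to the optimal value.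
   Context: The algorithm knows $\boldsymbol{v}$ and $X$ but not $\bar{\boldsymbol{w}}$; a deterministic algorithm chooses each point to label as a function only of the previously obtained labels. The asymptotic bound is in $n$ with $\epsilon$ fixed. *)

From HB Require Import structures.
From mathcomp Require Import all_boot all_order all_algebra.
From mathcomp Require Import all_classical all_reals all_analysis.
Set Implicit Arguments. Unset Strict Implicit. Unset Printing Implicit Defensive.
Import Order.TTheory GRing.Theory Num.Theory.
Local Open Scope ring_scope.

Notation bpoint n := {ffun 'I_n -> bool}.

Definition dotb (R : realType) (n : nat) (u : 'I_n -> R) (x : bpoint n) : R :=
  \sum_(i < n) u i * (x i)%:R.

(* The constraint  w . x <= 1 ; this is exactly the oracle's answer. *)
Definition feasible (R : realType) (n : nat) (w : 'I_n -> R) (x : bpoint n) : bool :=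
  dotb w x <= 1.

(* A deterministic algorithm: knows n, v and X, and chooses the next point to
   label as a function of the labels obtained so far (in order). *)
Definition algorithm (R : realType) :=
  forall n : nat, ('I_n -> R) -> {set bpoint n} -> seq bool -> bpoint n.

Definition valid_alg (R : realType) (A : algorithm R) : Prop :=
  forall n (v : 'I_n -> R) (X : {set bpoint n}) (h : seq bool),
    X != finset.set0 -> A n v X h \in X.

Fixpoint history (R : realType) (A : algorithm R) n (v : 'I_n -> R)
    (X : {set bpoint n}) (w : 'I_n -> R) (k : nat) : seq bool :=
  match k with
  | 0 => [::]
  | k'.+1 => let h := history A v X w k' in
             rcons h (feasible w (A n v X h))
  end.

(* The point labelled in the (k+1)-th oracle call (k = 0, 1, ...). *)
Definition query (R : realType) (A : algorithm R) n (v : 'I_n -> R)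
    (X : {set bpoint n}) (w : 'I_n -> R) (k : nat) : bpoint n :=
  A n v X (history A v X w k).

Definition good_sol (R : realType) n (v : 'I_n -> R) (X : {set bpoint n})
    (w : 'I_n -> R) (eps : R) (x : bpoint n) : Prop :=
  [/\ x \in X, feasible w x &
      forall y, y \in X -> feasible w y -> (1 - eps) * dotb v y <= dotb v x].

From HB Require Import structures.
From mathcomp Require Import all_boot all_order all_algebra.
From mathcomp Require Import all_classical all_reals all_analysis.
From mathcomp Require Import zify.
Import Order.TTheory GRing.Theory Num.Theory.
Local Open Scope ring_scope.

(* Let X be the indicator vectors of the m-subsets of {0..n-1}, with
   m = trunc(1/eps) + 2, and v = 1, so that every point of X has the same value.
   Weight 1/m on a hidden m-set A0 and 1 elsewhere makes the indicator of A0 the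
   only feasible point of X.  Answering "infeasible" to every query fixes the
   sequence of points the algorithm labels; choosing A0 outside its first
   C(n, m) - 1 entries makes all those answers truthful, and
   C(n, m) >= n^m / (2^m m!) >= c n^(1/eps) once n >= 2m. *)

Lemma expn_subn_le_ffact n m : ((n - m) ^ m <= n ^_ m)%N.
Proof.
elim: m n => [|m IH] n; first by rewrite ffactn0 expn0.
rewrite ffactnS expnS leq_mul ?leq_subr //.
by have -> : (n - m.+1 = n.-1 - m)%N by lia.
Qed.

Lemma expn_le_binomial n m : (2 * m <= n)%N -> (n ^ m <= 2 ^ m * m`! * 'C(n, m))%N.
Proof.
move=> le2mn; case: m le2mn => [|m] le2mn; first by rewrite bin0.
have le_n_2nm : (n ^ m.+1 <= (2 * (n - m.+1)) ^ m.+1)%N by rewrite leq_exp2r //; lia.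
apply: (leq_trans le_n_2nm); rewrite expnMn -mulnA leq_mul2l.
by rewrite mulnC bin_ffact expn_subn_le_ffact orbT.
Qed.

Lemma powR_le_binomial (R : realType) n m (p : R) :
  (0 < n)%N -> (2 * m <= n)%N -> 0 <= p <= m%:R ->
  ((2 ^ m * m`!)%N%:R)^-1 * n%:R `^ p <= 'C(n, m)%:R.
Proof.
move=> n_gt0 le2mn /andP[p_ge0 le_pm].
have cst_gt0 : 0 < (2 ^ m * m`!)%N%:R :> R by rewrite ltr0n muln_gt0 expn_gt0 fact_gt0.
rewrite ler_pdivrMl // -natrM (le_trans (y := n%:R ^+ m)) //.
  by rewrite -powR_mulrn ?ler0n // ler_powR // ler1n.
by rewrite -natrX ler_nat expn_le_binomial.
Qed.

Section HiddenSet.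
Variables (R : realType) (n m : nat).

Definition indicator (B : {set 'I_n}) : bpoint n := [ffun i => i \in B].

Lemma indicator_inj : injective indicator.
Proof.
move=> A B eqAB; apply/setP => i.
by have := congr1 (fun x : bpoint n => x i) eqAB; rewrite !ffunE.
Qed.

Lemma dotb_indicator (u : 'I_n -> R) B : dotb u (indicator B) = \sum_(i in B) u i.
Proof.
rewrite /dotb [RHS]big_mkcond; apply: eq_bigr => i _.
by rewrite ffunE; case: (i \in B); rewrite ?mulr1 ?mulr0.
Qed.

Definition msets : {set bpoint n} := indicator @: [set B : {set 'I_n} | #|B| == m].

Lemma card_msets : #|msets| = 'C(n, m).
Proof.
rewrite card_in_imset; last by move=> ? ? _ _; apply: indicator_inj.
by rewrite card_draws card_ord.
Qed.

Lemma mem_msets x :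
  reflect (exists2 B : {set 'I_n}, #|B| = m & x = indicator B) (x \in msets).
Proof.
apply: (iffP imsetP) => [[B] | [B cardB ->]]; last by exists B; rewrite ?inE ?cardB.
by rewrite inE => /eqP cardB ->; exists B.
Qed.

Definition hidden_weight (A0 : {set 'I_n}) (i : 'I_n) : R :=
  if i \in A0 then m%:R^-1 else 1.

Hypothesis m_gt1 : (1 < m)%N.

Lemma hidden_weight_gt0 A0 i : 0 < hidden_weight A0 i.
Proof. by rewrite /hidden_weight; case: ifP; rewrite ?invr_gt0 ?ltr0n //; lia. Qed.

Lemma hidden_weight_le1 A0 i : hidden_weight A0 i <= 1.
Proof. by rewrite /hidden_weight; case: ifP; rewrite ?invf_le1 ?ltr0n ?ler1n //; lia. Qed.

Lemma feasible_hidden_weight (A0 B : {set 'I_n}) : #|A0| = m -> #|B| = m ->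
  feasible (hidden_weight A0) (indicator B) = (B == A0).
Proof.
move=> cardA0 cardB; rewrite /feasible dotb_indicator.
have [->|neqBA0] := eqVneq B A0.
  rewrite (eq_bigr (fun=> m%:R^-1)) => [|i iA0]; last by rewrite /hidden_weight iA0.
  by rewrite sumr_const cardA0 -[_ *+ m]mulr_natr mulVf ?lexx // pnatr_eq0; lia.
apply/negbTE; rewrite -ltNge.
have /subsetPn[j jB jA0] : ~~ (B \subset A0).
  by apply: contra neqBA0 => subBA0; rewrite eqEcard subBA0 cardA0 cardB leqnn.
(* an element j of B outside A0 already has weight 1, and m > 1 gives a second one *)
have /card_gt0P[k] : (0 < #|B :\ j|)%N.
  by move: cardB; rewrite (cardsD1 j B) jB; lia.
rewrite !inE => /andP[kj kB].
rewrite (bigD1 j) //= {1}/hidden_weight (negbTE jA0) ltrDl.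
rewrite (bigD1 k) /=; last by rewrite kB kj.
by rewrite ltr_wpDr ?hidden_weight_gt0 ?sumr_ge0 // => i _; rewrite ltW ?hidden_weight_gt0.
Qed.

End HiddenSet.

Arguments indicator {n}.
Arguments hidden_weight R {n} m A0 i.

Lemma exists_unlisted {T : finType} {X : {set T}} (q : nat -> T) {K} :
  (K < #|X|)%N -> exists2 x, x \in X & forall j, (j < K)%N -> q j != x.
Proof.
move=> ltKX.
have /subsetPn[x xX xQ] : ~~ (X \subset [set q j | j : 'I_K]).
  apply: contraTN ltKX => /subset_leq_card leXQ; rewrite -leqNgt.
  by rewrite (leq_trans leXQ) // (leq_trans (leq_imset_card _ _)) ?card_ord.
exists x => // j ltjK; apply: contraNneq xQ => <-.
by apply/imsetP; exists (Ordinal ltjK).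
Qed.

Section RejectedRun.
Variables (R : realType) (A : algorithm R) (n : nat) (v : 'I_n -> R).
Variables (X : {set bpoint n}) (w : 'I_n -> R).

Definition query_after_rejections (j : nat) : bpoint n := A n v X (nseq j false).

Lemma history_rejected k :
  (forall j, (j < k)%N -> ~~ feasible w (query_after_rejections j)) ->
  history A v X w k = nseq k false.
Proof.
elim: k => [|k IH] rejected //=.
rewrite IH => [|j ltjk]; last exact/rejected/ltnW.
by rewrite (negbTE (rejected k _)) // -cats1 -[RHS]/(nseq k.+1 false) -addn1 nseqD.
Qed.

Lemma query_rejected k :
  (forall j, (j <= k)%N -> ~~ feasible w (query_after_rejections j)) ->
  ~~ feasible w (query A v X w k).
Proof.
move=> rejected; rewrite /query history_rejected; first exact: rejected.
by move=> j /ltnW; apply: rejected.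
Qed.

End RejectedRun.

Arguments query_after_rejections {R} A {n} v X j.

Lemma hidden_set_rejects_early_queries {R : realType} {A : algorithm R} (hA : valid_alg A)
    {n m} (v : 'I_n -> R) : (1 < m <= n)%N ->
  exists2 A0 : {set 'I_n}, #|A0| = m &
    forall k, (k.+1 < 'C(n, m))%N ->
      ~~ feasible (hidden_weight R m A0) (query A v (msets n m) (hidden_weight R m A0) k).
Proof.
case/andP=> m_gt1 le_mn.
have ltCX : ('C(n, m).-1 < #|msets n m|)%N by rewrite card_msets prednK ?bin_gt0.
have [_ /mem_msets[A0 cardA0 ->] unlisted] :=
  exists_unlisted (query_after_rejections A v (msets n m)) ltCX.
exists A0 => // k ltkC; apply: query_rejected => j lejk.
have /mem_msets[B cardB qjB] : query_after_rejections A v (msets n m) j \in msets n m.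
  by apply: hA; rewrite -card_gt0 card_msets bin_gt0.
rewrite qjB feasible_hidden_weight //; apply: contra (unlisted j _) => [/eqP <-|].
  by rewrite qjB.
lia.
Qed.

Theorem theorem1 (R : realType) (A : algorithm R) (hA : valid_alg A)
    (eps : R) (heps : 0 < eps < 1) :
  exists c : R, 0 < c /\
  exists N : nat, forall n : nat, (N <= n)%N ->
    exists (v : 'I_n -> R) (X : {set bpoint n}) (w : 'I_n -> R),
      [/\ forall i, 0 <= v i,
          forall i, 0 <= w i <= 1,
          exists x, x \in X /\ feasible w x &
          forall k : nat, (k.+1)%:R < c * (n%:R `^ eps^-1) ->
            ~ good_sol v X w eps (query A v X w k)].
Proof.
set m := (Num.truncn eps^-1).+2.
have inv_eps_le_m : 0 <= eps^-1 <= m%:R.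
  case/andP: heps => eps_gt0 _; rewrite invr_ge0 ltW //=.
  by rewrite ltW // (lt_le_trans (truncnS_gt _)) // ler_nat.
exists ((2 ^ m * m`!)%N%:R)^-1; split.
  by rewrite invr_gt0 ltr0n muln_gt0 expn_gt0 fact_gt0.
exists (2 * m)%N => n le2mn.
have m_gt1 : (1 < m)%N by [].
have m_bounds : (1 < m <= n)%N by rewrite m_gt1; lia.
have [A0 cardA0 rejected] := hidden_set_rejects_early_queries hA (fun=> 1) m_bounds.
exists (fun=> 1), (msets n m), (hidden_weight R m A0); split.
- by move=> _; apply: ler01.
- by move=> i; rewrite ltW ?hidden_weight_le1 ?hidden_weight_gt0.
- exists (indicator A0); split; first by apply/mem_msets; exists A0.
  by rewrite feasible_hidden_weight ?eqxx.
- move=> k small_k [_ feasible_k _]; apply/negP: feasible_k; apply: rejected.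
  rewrite -(ltr_nat R) (lt_le_trans small_k) //.
  apply: powR_le_binomial => //; lia.
Qed.
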